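(* Let $\mathcal A$ and $\mathcal B$ be collections, and set $\mathcal B_\Gamma=\{B\in\mathcal B:\text{every infinite }B'\subseteq B\text{ belongs to }\mathcal B\}$. If $\mathcal A$ is a filter base, then $\mathrm{I}\uparrow G_1(\mathcal A,\neg\mathcal B)$ if and only if $\mathrm{I}\uparrow G_1(\mathcal A,\neg\mathcal B_\Gamma)$.
   Context: $\mathcal A$ is a filter base if its members are nonempty sets and for all $A_1,A_2\in\mathcal A$ there is $A_3\in\mathcal A$ with $A_3\subseteq A_1\cap A_2$. For collections $\mathcal E,\mathcal C$, in the game $G_1(\mathcal E,\mathcal C)$, at each inning $n\in\omega$ player One plays $E_n\in\mathcal E$ and Two picks $x_n\in E_n$; Two wins iff $\{x_n:n\in\omega\}\in\mathcal C$, otherwise One wins. $\neg\mathcal C$ is the complement of $\mathcal C$ (so Two wins $G_1(\mathcal E,\neg\mathcal C)$ iff $\{x_n:n\in\omega\}\notin\mathcal C$). A strategy for One maps each finite sequence of Two's previous moves to a move in $\mathcal E$; it is winning if One wins every play following it. $\mathrm{I}\uparrow G$ means One has a winning strategy in $G$. *)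

From mathcomp Require Import all_boot.
From mathcomp Require Import boolp classical_sets cardinality.
Set Implicit Arguments. Unset Strict Implicit. Unset Printing Implicit Defensive.
Local Open Scope classical_set_scope.

Definition filter_base (X : Type) (A : set (set X)) : Prop :=
  (forall S, A S -> S !=set0) /\
  (forall A1 A2, A A1 -> A A2 -> exists2 A3, A A3 & A3 `<=` A1 `&` A2).

Definition prev_moves (X : Type) (x : nat -> X) (n : nat) : seq X :=
  map x (iota 0 n).

(* A strategy for One maps finite sequences of Two's previous moves to a move. *)
Definition strategy (X : Type) := seq X -> set X.

Definition follows (X : Type) (sigma : strategy X) (x : nat -> X) : Prop :=
  forall n, sigma (prev_moves x n) (x n).

(* sigma is a winning strategy for One in G_1(E, C):
   every move lies in E, and for every play following sigma,
   Two does not win, i.e. {x_n : n} is not in C. *)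
Definition one_winning (X : Type) (E C : set (set X)) (sigma : strategy X) : Prop :=
  (forall s, E (sigma s)) /\
  (forall x, follows sigma x -> ~ C (range x)).

Definition I_has_winning (X : Type) (E C : set (set X)) : Prop :=
  exists sigma : strategy X, one_winning E C sigma.

Definition negC (X : Type) (C : set (set X)) : set (set X) := ~` C.

Definition Gamma (X : Type) (B : set (set X)) : set (set X) :=
  [set S | B S /\ forall S', S' `<=` S -> infinite_set S' -> B S'].

(* Let sigma be a winning strategy for One in G_1(A, not B): every play
   following sigma has its range in B.  Since A is a filter base, One can
   instead play, at a position s, a member of A contained in sigma's answers
   to all the (finitely many) subsequences of s.  Every subsequence of a play
   following this new strategy then follows sigma, so its range is in B; and
   every infinite subset of the range of a play is the range of such a
   subsequence, obtained by enumerating its preimage in increasing order. *)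
From mathcomp Require Import all_boot.
From mathcomp Require Import boolp classical_sets cardinality.
Set Implicit Arguments. Unset Strict Implicit. Unset Printing Implicit Defensive.
Local Open Scope classical_set_scope.

Lemma filter_base_finite_lb (X : Type) (A : set (set X)) (I : finType)
    (F : I -> set X) :
  filter_base A -> I -> (forall i, A (F i)) ->
  exists2 T, A T & forall i, T `<=` F i.
Proof.
move=> [_ capA] i0 AF.
suff [T AT TF] : exists2 T, A T & forall i, i \in i0 :: enum I -> T `<=` F i.
  by exists T => // i; apply: TF; rewrite inE mem_enum orbT.
elim: (enum I) => [|i s [T AT TF]].
  by exists (F i0) => // i; rewrite inE => /eqP ->.
have [T' AT' T'TF] := capA _ _ AT (AF i).
exists T' => // j; rewrite !inE => /or3P[j_i0|/eqP->|j_s] x /T'TF[Tx Fix] //.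
  by apply: (TF j _ x Tx); rewrite inE j_i0.
by apply: (TF j _ x Tx); rewrite inE j_s orbT.
Qed.

Lemma subseq_iota_increasing (g : nat -> nat) : {homo g : m n / m < n} ->
  forall n, subseq (map g (iota 0 n)) (iota 0 (g n)).
Proof.
move=> g_incr; elim=> [|n IHn]; first exact: sub0seq.
have gn_lt : g n < g n.+1 := g_incr _ _ (ltnSn n).
rewrite -(subnKC (ltnW gn_lt)) iotaD add0n -[n.+1]addn1 iotaD map_cat.
apply: cat_subseq => //; rewrite sub1seq mem_iota leqnn /=.
by rewrite add0n addn1 subnKC // ltnW.
Qed.

Lemma increasing_enum_infinite_set (N : set nat) : infinite_set N ->
  exists2 g : nat -> nat, {homo g : m n / m < n} & range g = N.
Proof.
move=> Ninf.
have next n : exists m, [/\ N m, n <= m & forall k, N k -> n <= k -> m <= k].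
  have ex_above : exists m, `[< N m /\ n <= m >].
    apply: contrapT => none; apply: Ninf.
    apply: sub_finite_set (finite_II n) => m Nm /=; rewrite ltnNge.
    by apply/negP => nm; apply: none; exists m; apply/asboolP.
  case: (ex_minnP ex_above) => m /asboolP[Nm nm] m_min.
  by exists m; split => // k Nk nk; apply: m_min; apply/asboolP.
have [nxt nxtP] := choice next.
pose g k := iter k (nxt \o succn) (nxt 0).
have Ng k : N (g k) by case: k => [|k]; [case: (nxtP 0) | case: (nxtP (g k).+1)].
have gS k : g k < g k.+1 by case: (nxtP (g k).+1).
have g_incr : {homo g : m n / m < n} := homo_ltn ltn_trans gS.
have g_ge k : k <= g k by elim: k => // k IHk; exact: leq_ltn_trans IHk (gS k).
have g0_min n : N n -> g 0 <= n.
  by move=> Nn; case: (nxtP 0) => _ _ /(_ n Nn (leq0n n)).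
have gS_min k n : N n -> g k < n -> g k.+1 <= n.
  by move=> Nn gk_lt; case: (nxtP (g k).+1) => _ _ /(_ n Nn gk_lt).
have g_onto k n : N n -> n <= g k -> exists k', g k' = n.
  elim: k n => [|k IHk] n Nn n_le.
    by exists 0; apply/eqP; rewrite eqn_leq n_le g0_min.
  have [|gk_lt] := leqP n (g k); first exact: IHk.
  by exists k.+1; apply/eqP; rewrite eqn_leq n_le gS_min.
exists g => //; apply/seteqP; split=> [_ [k _ <-] //|n Nn].
by have [k gk] := g_onto n n Nn (g_ge n); exists k.
Qed.

Lemma infinite_subset_range_subsequence (X : Type) (x : nat -> X) (S : set X) :
  S `<=` range x -> infinite_set S ->
  exists2 g : nat -> nat, {homo g : m n / m < n} & range (x \o g) = S.
Proof.
move=> S_range Sinf.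
have image_preimage_S : x @` (x @^-1` S) = S.
  apply/seteqP; split; first exact: image_preimage_subset.
  by move=> s Ss; have [n _ xn] := S_range s Ss; exists n; rewrite //= xn.
have [|g g_incr gN] := @increasing_enum_infinite_set (x @^-1` S).
  by move=> fin; apply: Sinf; rewrite -image_preimage_S; exact: finite_image.
by exists g => //; rewrite -image_preimage_S -gN image_comp.
Qed.

Lemma prev_moves_subsequence (X : Type) (x : nat -> X) (g : nat -> nat) n :
  {homo g : m n / m < n} ->
  exists2 m : seq bool, size m = size (prev_moves x (g n))
                      & prev_moves (x \o g) n = mask m (prev_moves x (g n)).
Proof.
move=> /subseq_iota_increasing /(_ n) /subseqP[m size_m gE].
by exists m; rewrite /prev_moves ?size_map // -map_mask -gE -map_comp.
Qed.

Section Refinement.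
Variable X : Type.

(* Masks of length [size s] enumerate all subsequences of [s]. *)
Definition refines (tau sigma : strategy X) : Prop :=
  forall s (m : seq bool), size m = size s -> tau s `<=` sigma (mask m s).

Lemma exists_refinement (A : set (set X)) (sigma : strategy X) :
  filter_base A -> (forall s, A (sigma s)) ->
  exists2 tau : strategy X, (forall s, A (tau s)) & refines tau sigma.
Proof.
move=> fbA sigmaA.
have lb s : exists T, A T /\ forall m : (size s).-tuple bool, T `<=` sigma (mask m s).
  have [T AT Tsub] := filter_base_finite_lb
    (F := fun m : (size s).-tuple bool => sigma (mask m s))
    fbA (nseq_tuple _ false) (fun=> sigmaA _).
  by exists T.
have [tau tauP] := choice lb.
exists tau => [s|s m size_m]; first by case: (tauP s).
by case: (tauP s) => _ /(_ (Tuple (introT eqP size_m))).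
Qed.

Lemma follows_subsequence (tau sigma : strategy X) (x : nat -> X) (g : nat -> nat) :
  refines tau sigma -> follows tau x -> {homo g : m n / m < n} ->
  follows sigma (x \o g).
Proof.
move=> tau_sigma x_tau g_incr n.
have [m size_m ->] := prev_moves_subsequence x n g_incr.
exact: tau_sigma (x_tau (g n)).
Qed.

End Refinement.

Lemma one_winning_negCP (X : Type) (E C : set (set X)) (sigma : strategy X) :
  one_winning E (negC C) sigma <->
  (forall s, E (sigma s)) /\ (forall x, follows sigma x -> C (range x)).
Proof.
split=> -[Esigma win]; split=> // x /win; first exact: contrapT.
by move=> Cx; apply.
Qed.

Lemma one_winning_subset (X : Type) (E C C' : set (set X)) (sigma : strategy X) :
  C `<=` C' -> one_winning E C' sigma -> one_winning E C sigma.
Proof. by move=> CC' [Esigma win]; split=> // x /win; apply: contra_not; apply: CC'. Qed.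

Lemma Gamma_sub (X : Type) (B : set (set X)) : Gamma B `<=` B.
Proof. by move=> S []. Qed.

Theorem mainTheorem3 (X : Type) (A B : set (set X)) :
  filter_base A ->
  (I_has_winning A (negC B) <-> I_has_winning A (negC (Gamma B))).
Proof.
move=> fbA; split=> [[sigma /one_winning_negCP[sigmaA sigma_win]]|[sigma win]].
- have [tau tauA tau_sigma] := exists_refinement fbA sigmaA.
  exists tau; apply/one_winning_negCP; split=> // x x_tau.
  have subseq_win g : {homo g : m n / m < n} -> B (range (x \o g)).
    by move=> g_incr; apply/sigma_win/(follows_subsequence tau_sigma x_tau).
  split; first exact: (subseq_win id).
  move=> S S_range Sinf.
  have [g g_incr <-] := infinite_subset_range_subsequence S_range Sinf.
  exact: subseq_win.
- by exists sigma; exact: one_winning_subset (subsetC (@Gamma_sub _ B)) win.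
Qed.
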